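(* Let $u^m\in\mathbb{P}^{\mathrm{disc}}_0(\mathcal{T}_h)$ and $v^m\in\mathbb{P}^{\mathrm{cont}}_1(\mathcal{T}_h)$ be given with $u^m\ge 0$ in $\Omega$ and, in the case $\tau>0$, $v^m\ge 0$ in $\Omega$. Then any solution $(v^{m+1},u^{m+1},\mu_\varepsilon^{m+1})$ of the fully discrete scheme (Step 1 and Step 2 described in the context) satisfies $u^{m+1}\ge 0$ and $v^{m+1}\ge 0$ in $\Omega$.
   Context: Let $\Omega\subset\mathbb{R}^2$ be a bounded polygonal domain and $\mathcal{T}_h$ a shape-regular triangular mesh of $\overline\Omega$ of size $h$. $\mathcal{E}_h^i$ denotes the set of interior edges. For an interior edge $e=\partial K\cap\partial L$ the two adjacent triangles are labelled $K,L$ so that the unit normal $\mathbf{n}_e$ points from $K$ to $L$; for a function $w$, $w_K,w_L$ are its traces from $K$ and $L$ and the jump is $[\![w]\!]=w_K-w_L$. $C_K$ denotes the barycenter of $K$, and $\mathcal{D}_e=|C_K-C_L|$ for $e=K\cap L\in\mathcal{E}_h^i$. The mesh is assumed to satisfy: (H1) for every interior edge $e=K\cap L$, the segment joining $C_K$ and $C_L$ is orthogonal to $e$; (H2) every angle of every triangle of $\mathcal{T}_h$ is at most $\pi/2$. $\mathbb{P}^{\mathrm{disc}}_0(\mathcal{T}_h)$ is the space of piecewise constant functions on $\mathcal{T}_h$, $\mathbb{P}^{\mathrm{cont}}_1(\mathcal{T}_h)$ the space of continuous piecewise linear functions, and $\Pi_0$ the $L^2(\Omega)$-orthogonal projection onto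 $\mathbb{P}^{\mathrm{disc}}_0(\mathcal{T}_h)$. For a scalar $w$, $w_\oplus=\max\{w,0\}$, $w_\ominus=-\min\{w,0\}$. $(\cdot,\cdot)$ is the $L^2(\Omega)$ inner product and $(f,g)_h=\int_\Omega I_h(fg)$ the mass-lumped inner product, $I_h$ being the nodal $\mathbb{P}_1$ interpolant. The upwind form is $$a^{upw}_h(\mu;u,\bar u)=\int_\Omega(\nabla\mu\cdot\nabla\bar u)\,u+\sum_{e\in\mathcal{E}_h^i,\,e=K\cap L}\frac{1}{\mathcal{D}_e}\int_e\Big(([\![\Pi_0\mu]\!])_\oplus u_K-([\![\Pi_0\mu]\!])_\ominus u_L\Big)[\![\bar u]\!].$$ Parameters: $k_0,\dots,k_4>0$, $\tau\in\{0,1\}$, time step $\Delta t>0$, $\varepsilon>0$; $\delta_t w^{m+1}=(w^{m+1}-w^m)/\Delta t$. The scheme: Step 1: find $v^{m+1}\in\mathbb{P}^{\mathrm{cont}}_1(\mathcal{T}_h)$ with $\tau(\delta_t v^{m+1},\bar v)_h+k_2(\nabla v^{m+1},\nabla\bar v)+k_3(v^{m+1},\bar v)_h-k_4(u^m,\bar v)=0$ for all $\bar v\in\mathbb{P}^{\mathrm{cont}}_1(\mathcal{T}_h)$. Step 2: find $(u^{m+1},\mu_\varepsilon^{m+1})\in\mathbb{P}^{\mathrm{disc}}_0(\mathcal{T}_h)^2$ with $u^{m+1}+\varepsilon>0$ such that $(\delta_t u^{m+1},\bar u)+a^{upw}_h(\mu_\varepsilon^{m+1};(u^{m+1})_\oplus,\bar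 u)=0$ and $(\mu_\varepsilon^{m+1},\bar\mu)-k_0(\log(u^{m+1}+\varepsilon),\bar\mu)+k_1(v^{m+1},\bar\mu)=0$ for all $\bar u,\bar\mu\in\mathbb{P}^{\mathrm{disc}}_0(\mathcal{T}_h)$. *)

From HB Require Import structures.
From mathcomp Require Import all_boot all_order all_algebra.
From mathcomp Require Import all_classical all_reals all_analysis.
Set Implicit Arguments. Unset Strict Implicit. Unset Printing Implicit Defensive.
Import Order.TTheory GRing.Theory Num.Theory.
Local Open Scope ring_scope.

Definition i0 : 'I_3 := @Ordinal 3 0 isT.
Definition i1 : 'I_3 := @Ordinal 3 1 isT.
Definition i2 : 'I_3 := @Ordinal 3 2 isT.

Section Mesh.
Variable R : realType.
Variables nV nT : nat.
Variable p : 'I_nV -> R * R.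
Variable tri : 'I_nT -> 'I_3 -> 'I_nV.

Definition dot (a b : R * R) : R := a.1 * b.1 + a.2 * b.2.
Definition vsub (a b : R * R) : R * R := (a.1 - b.1, a.2 - b.2).
Definition dist (a b : R * R) : R := Num.sqrt (dot (vsub a b) (vsub a b)).

Definition vtx (K : 'I_nT) (i : 'I_3) : R * R := p (tri K i).

(* signed twice-area of K *)
Definition sdet (K : 'I_nT) : R :=
  let e1 := vsub (vtx K i1) (vtx K i0) in
  let e2 := vsub (vtx K i2) (vtx K i0) in
  e1.1 * e2.2 - e2.1 * e1.2.

Definition area (K : 'I_nT) : R := `|sdet K| / 2.

Definition bary (K : 'I_nT) : R * R :=
  ((\sum_i (vtx K i).1) / 3, (\sum_i (vtx K i).2) / 3).

Definition in_tri (K : 'I_nT) (x : R * R) : Prop :=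
  exists l : 'I_3 -> R, (forall i, 0 <= l i) /\ \sum_i l i = 1 /\
    x = (\sum_i l i * (vtx K i).1, \sum_i l i * (vtx K i).2).
Definition in_tri_int (K : 'I_nT) (x : R * R) : Prop :=
  exists l : 'I_3 -> R, (forall i, 0 < l i) /\ \sum_i l i = 1 /\
    x = (\sum_i l i * (vtx K i).1, \sum_i l i * (vtx K i).2).

Definition common (K L : 'I_nT) : {set 'I_nV} :=
  [set a | (a \in codom (tri K)) && (a \in codom (tri L))].

Definition in_hull (S : {set 'I_nV}) (x : R * R) : Prop :=
  exists l : 'I_nV -> R, (forall a, 0 <= l a) /\ (forall a, a \notin S -> l a = 0)
    /\ \sum_a l a = 1 /\ x = (\sum_a l a * (p a).1, \sum_a l a * (p a).2).

(* K and L share an (interior) edge *)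
Definition adjacent (K L : 'I_nT) : bool := (K != L) && (#|common K L| == 2)%N.

Definition ea (K L : 'I_nT) : 'I_nV := nth (tri K i0) (enum (common K L)) 0.
Definition eb (K L : 'I_nT) : 'I_nV := nth (tri K i0) (enum (common K L)) 1.
Definition edge_len (K L : 'I_nT) : R := dist (p (ea K L)) (p (eb K L)).
Definition De (K L : 'I_nT) : R := dist (bary K) (bary L).

(* T_h is a (conforming) triangulation of Omega := union of its triangles *)
Definition is_mesh : Prop :=
  (forall K, sdet K != 0) /\
  (forall a : 'I_nV, exists K i, tri K i = a) /\
  (forall K L, K != L -> forall x, ~ (in_tri_int K x /\ in_tri_int L x)) /\
  (forall K L x, in_tri K x -> in_tri L x -> in_hull (common K L) x).

Definition H1 : Prop :=
  forall K L, adjacent K L ->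
    dot (vsub (bary K) (bary L)) (vsub (p (ea K L)) (p (eb K L))) = 0.

(* (H2): every angle is at most pi/2, i.e. has nonnegative cosine *)
Definition H2 : Prop :=
  forall K (i j k : 'I_3), i != j -> i != k -> j != k ->
    0 <= dot (vsub (vtx K j) (vtx K i)) (vsub (vtx K k) (vtx K i)).

(* P0 functions: 'I_nT -> R (value on each K);
   continuous P1 functions: 'I_nV -> R (nodal values). *)

Definition grad (K : 'I_nT) (v : 'I_nV -> R) : R * R :=
  let e1 := vsub (vtx K i1) (vtx K i0) in
  let e2 := vsub (vtx K i2) (vtx K i0) in
  let d1 := v (tri K i1) - v (tri K i0) in
  let d2 := v (tri K i2) - v (tri K i0) in
  ((d1 * e2.2 - d2 * e1.2) / sdet K, (d2 * e1.1 - d1 * e2.1) / sdet K).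

Definition stiff (v w : 'I_nV -> R) : R := \sum_K area K * dot (grad K v) (grad K w).
(* mass-lumped product (f, g)_h = int I_h(f g) for P1 f, g *)
Definition lumped (f g : 'I_nV -> R) : R :=
  \sum_K area K / 3 * \sum_i f (tri K i) * g (tri K i).
Definition ip00 (u w : 'I_nT -> R) : R := \sum_K area K * u K * w K.
Definition ip01 (u : 'I_nT -> R) (v : 'I_nV -> R) : R :=
  \sum_K area K * u K * ((\sum_i v (tri K i)) / 3).

Definition posp (x : R) : R := Num.max x 0.
Definition negp (x : R) : R := - Num.min x 0.

(* upwind form for mu, w, ubar in P0 (the volume term vanishes since the
   elementwise gradient of P0 functions is 0, and Pi_0 mu = mu). Each interior
   edge e = K /\ L is counted once, labelled with K the smaller index. *)
Definition a_upw (mu w ubar : 'I_nT -> R) : R :=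
  \sum_K \sum_(L | (val K < val L)%N && adjacent K L)
    edge_len K L / De K L *
    (posp (mu K - mu L) * w K - negp (mu K - mu L) * w L) * (ubar K - ubar L).

Definition step1 (tau dt k2 k3 k4 : R) (um : 'I_nT -> R) (vm v1 : 'I_nV -> R) : Prop :=
  forall vbar : 'I_nV -> R,
    tau * lumped (fun a => (v1 a - vm a) / dt) vbar + k2 * stiff v1 vbar
    + k3 * lumped v1 vbar - k4 * ip01 um vbar = 0.

Definition step2 (dt eps k0 k1 : R) (um u1 mu : 'I_nT -> R) (v1 : 'I_nV -> R) : Prop :=
  (forall K, 0 < u1 K + eps) /\
  (forall ubar : 'I_nT -> R,
     ip00 (fun K => (u1 K - um K) / dt) ubar + a_upw mu (fun K => posp (u1 K)) ubar = 0) /\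
  (forall mubar : 'I_nT -> R,
     ip00 mu mubar - k0 * ip00 (fun K => ln (u1 K + eps)) mubar + k1 * ip01 mubar v1 = 0).

Definition P1_nonneg (v : 'I_nV -> R) : Prop :=
  forall K (l : 'I_3 -> R), (forall i, 0 <= l i) -> \sum_i l i = 1 ->
    0 <= \sum_i l i * v (tri K i).

Definition P0_nonneg (u : 'I_nT -> R) : Prop := forall K, 0 <= u K.

End Mesh.

(* Positivity of u: testing the u-equation with the negative part u^- of
   u^{m+1} gives (1/dt) sum_K |K| ((u^-)^2 + u^m u^-) = -a_upw(mu; u^+, u^-).
   Upwinding only ever pairs u^+ on one side of an edge with u^- on the other
   (and u^+ u^- = 0), so the right-hand side is <= 0 and u^- vanishes.
   Positivity of v: test Step 1 with the hat function phi_a of a node a where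
   v^{m+1} is minimal.  Under (H2) the off-diagonal stiffness entries are
   nonpositive, hence (grad v, grad phi_a) <= 0 at a minimum; mass lumping
   makes the time and reaction terms diagonal and k4 (u^m, phi_a) >= 0, so
   v^{m+1}(a) >= 0. *)

From HB Require Import structures.
From mathcomp Require Import all_boot all_order all_algebra.
From mathcomp Require Import all_classical all_reals all_analysis.
From mathcomp Require Import ring lra.
Import Order.TTheory GRing.Theory Num.Theory.
Local Open Scope ring_scope.
Set Implicit Arguments. Unset Strict Implicit. Unset Printing Implicit Defensive.

Section AffineGradient.
Variable R : realType.

Definition tri_det (P0 P1 P2 : R * R) : R :=
  let e1 := vsub P1 P0 in let e2 := vsub P2 P0 in e1.1 * e2.2 - e2.1 * e1.2.

Definition affine_grad (P0 P1 P2 : R * R) (w0 w1 w2 : R) : R * R :=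
  let e1 := vsub P1 P0 in let e2 := vsub P2 P0 in
  (((w1 - w0) * e2.2 - (w2 - w0) * e1.2) / tri_det P0 P1 P2,
   ((w2 - w0) * e1.1 - (w1 - w0) * e2.1) / tri_det P0 P1 P2).

Lemma tri_det_rot P0 P1 P2 : tri_det P1 P2 P0 = tri_det P0 P1 P2.
Proof. by rewrite /tri_det /vsub /=; ring. Qed.

Lemma affine_grad_rot P0 P1 P2 w0 w1 w2 : tri_det P0 P1 P2 != 0 ->
  affine_grad P1 P2 P0 w1 w2 w0 = affine_grad P0 P1 P2 w0 w1 w2.
Proof.
case: P0 P1 P2 => [x0 y0] [x1 y1] [x2 y2].
rewrite /affine_grad tri_det_rot /tri_det /vsub /= => hD.
by congr (_, _); field.
Qed.

Lemma dot_affine_grad_rot P0 P1 P2 w0 w1 w2 w0' w1' w2' :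
  tri_det P0 P1 P2 != 0 ->
  dot (affine_grad P0 P1 P2 w0 w1 w2) (affine_grad P0 P1 P2 w0' w1' w2') =
  dot (affine_grad P1 P2 P0 w1 w2 w0) (affine_grad P1 P2 P0 w1' w2' w0').
Proof. by move=> hD; rewrite !(affine_grad_rot _ _ _ hD). Qed.

Lemma dot_affine_grad_hat P0 P1 P2 w0 w1 w2 : tri_det P0 P1 P2 != 0 ->
  dot (affine_grad P0 P1 P2 w0 w1 w2) (affine_grad P0 P1 P2 1 0 0) =
  - ((w1 - w0) * dot (vsub P0 P2) (vsub P1 P2)
     + (w2 - w0) * dot (vsub P0 P1) (vsub P2 P1)) / tri_det P0 P1 P2 ^+ 2.
Proof.
case: P0 P1 P2 => [x0 y0] [x1 y1] [x2 y2].
by rewrite /affine_grad /dot /tri_det /vsub /= => hD; field.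
Qed.

Lemma dot_affine_grad_hat_le0 P0 P1 P2 w0 w1 w2 : tri_det P0 P1 P2 != 0 ->
  0 <= dot (vsub P0 P1) (vsub P2 P1) -> 0 <= dot (vsub P0 P2) (vsub P1 P2) ->
  w0 <= w1 -> w0 <= w2 ->
  dot (affine_grad P0 P1 P2 w0 w1 w2) (affine_grad P0 P1 P2 1 0 0) <= 0.
Proof.
move=> hD angle1 angle2 hw1 hw2; rewrite dot_affine_grad_hat // mulNr oppr_le0.
by rewrite divr_ge0 ?sqr_ge0 // addr_ge0 // mulr_ge0 // subr_ge0.
Qed.

End AffineGradient.

Section PositiveNegativeParts.
Variable R : realType.
Implicit Types x y s c : R.

Lemma posp_ge0 x : 0 <= posp x.
Proof. by rewrite /posp le_max lexx orbT. Qed.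

Lemma negp_ge0 x : 0 <= negp x.
Proof. by rewrite /negp oppr_ge0 ge_min lexx orbT. Qed.

Lemma posp_mul_negp x : posp x * negp x = 0.
Proof.
by rewrite /posp /negp; case: (leP x 0) => hx; rewrite ?mul0r ?oppr0 ?mulr0.
Qed.

Lemma mul_negp x : x * negp x = - negp x ^+ 2.
Proof.
rewrite /negp; case: (leP x 0) => hx;
  by rewrite ?oppr0 ?mulr0 ?expr0n ?oppr0 // sqrrN mulrN expr2.
Qed.

Lemma diff_mul_negp x y : (x - y) * negp x = - (negp x ^+ 2 + y * negp x).
Proof. by rewrite mulrBl mul_negp opprD. Qed.

Lemma negp_gt0 x : (0 < negp x) = (x < 0).
Proof. by rewrite /negp oppr_gt0 gt_min ltxx orbF. Qed.

Lemma upwind_flux_le0 c s x y : 0 <= c ->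
  c * (posp s * posp x - negp s * posp y) * (negp x - negp y) <= 0.
Proof.
move=> hc; rewrite -mulrA mulr_ge0_le0 //.
have -> : (posp s * posp x - negp s * posp y) * (negp x - negp y) =
  posp s * (posp x * negp x) + negp s * (posp y * negp y)
  - (posp s * (posp x * negp y) + negp s * (posp y * negp x)) by ring.
rewrite !posp_mul_negp !mulr0 addr0 sub0r oppr_le0.
by rewrite addr_ge0 // !mulr_ge0 ?posp_ge0 ?negp_ge0.
Qed.

End PositiveNegativeParts.

Lemma sum_indicator_mul (R : pzSemiRingType) (I : finType) (i : I) (F : I -> R) :
  \sum_j (j == i)%:R * F j = F i.
Proof.
by under eq_bigr do rewrite mulr_natl mulrb; rewrite -big_mkcond big_pred1_eq.
Qed.

Section Mesh.
Variable R : realType.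
Variables nV nT : nat.
Variable p : 'I_nV -> R * R.
Variable tri : 'I_nT -> 'I_3 -> 'I_nV.

Definition hat (a : 'I_nV) : 'I_nV -> R := fun b => (b == a)%:R.

Lemma hatE a b : hat a b = (b == a)%:R.
Proof. by []. Qed.

Lemma gradE K v : grad p tri K v =
  affine_grad (vtx p tri K i0) (vtx p tri K i1) (vtx p tri K i2)
              (v (tri K i0)) (v (tri K i1)) (v (tri K i2)).
Proof. by []. Qed.

Lemma area_ge0 K : 0 <= area p tri K.
Proof. by rewrite /area divr_ge0. Qed.

Lemma area_gt0 K : sdet p tri K != 0 -> 0 < area p tri K.
Proof. by move=> hK; rewrite /area divr_gt0 // normr_gt0. Qed.

Lemma sdet_vertices_neq K : sdet p tri K != 0 ->
  [/\ tri K i1 != tri K i0, tri K i2 != tri K i0 & tri K i2 != tri K i1].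
Proof.
by move=> hK; split; apply: contra_neq hK => e; rewrite /sdet /vtx e /vsub /=; ring.
Qed.

Lemma dot_grad_hat_le0 K v a : sdet p tri K != 0 -> H2 p tri ->
  (forall i, v a <= v (tri K i)) -> dot (grad p tri K v) (grad p tri K (hat a)) <= 0.
Proof.
move=> hK hH2; have [n10 n20 n21] := sdet_vertices_neq hK.
have hK1 : tri_det (vtx p tri K i1) (vtx p tri K i2) (vtx p tri K i0) != 0.
  by rewrite tri_det_rot.
have hK2 : tri_det (vtx p tri K i2) (vtx p tri K i0) (vtx p tri K i1) != 0.
  by rewrite 2!tri_det_rot.
rewrite !gradE !hatE.
(* Relabelling the vertices cyclically brings a to position 0. *)
have [<-|_] := eqVneq (tri K i0) a.
  rewrite (negbTE n10) (negbTE n20) => hmin.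
  by apply: (dot_affine_grad_hat_le0 _ (hH2 K i1 i0 i2 isT isT isT)
                                       (hH2 K i2 i0 i1 isT isT isT)) => //; apply: hmin.
have [<-|_] := eqVneq (tri K i1) a.
  rewrite (negbTE n21) dot_affine_grad_rot // => hmin.
  by apply: (dot_affine_grad_hat_le0 _ (hH2 K i2 i1 i0 isT isT isT)
                                       (hH2 K i0 i1 i2 isT isT isT)) => //; apply: hmin.
have [<-|_] := eqVneq (tri K i2) a.
  rewrite dot_affine_grad_rot // dot_affine_grad_rot // => hmin.
  by apply: (dot_affine_grad_hat_le0 _ (hH2 K i0 i2 i1 isT isT isT)
                                       (hH2 K i1 i2 i0 isT isT isT)) => //; apply: hmin.
by rewrite /dot /affine_grad !subrr !mul0r !subrr !mul0r !mulr0 addr0.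
Qed.

Lemma stiff_hat_le0 v a : (forall K, sdet p tri K != 0) -> H2 p tri ->
  (forall b, v a <= v b) -> stiff p tri v (hat a) <= 0.
Proof.
move=> hsdet hH2 hmin; apply: sumr_le0 => K _.
by rewrite mulr_ge0_le0 ?area_ge0 ?dot_grad_hat_le0.
Qed.

Definition lumped_mass (a : 'I_nV) : R := lumped p tri (fun=> 1) (hat a).

Lemma lumped_hat f a : lumped p tri f (hat a) = f a * lumped_mass a.
Proof.
rewrite /lumped_mass /lumped mulr_sumr; apply: eq_bigr => K _.
rewrite mulrCA; congr (_ * _); rewrite mulr_sumr; apply: eq_bigr => i _.
by rewrite hatE; case: eqP => [->|_]; rewrite ?mulr0 ?mulr1.
Qed.

Lemma lumped_mass_gt0 a K i : (forall K, sdet p tri K != 0) -> tri K i = a ->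
  0 < lumped_mass a.
Proof.
move=> hsdet hKi.
have hat_ge0 L j : 0 <= 1 * hat a (tri L j) by rewrite mul1r hatE ler0n.
rewrite /lumped_mass /lumped (bigD1 K) //=; apply: ltr_wpDr.
  apply: sumr_ge0 => L _; rewrite mulr_ge0 ?divr_ge0 ?area_ge0 //.
  by apply: sumr_ge0 => j _; apply: hat_ge0.
apply: mulr_gt0; first by rewrite divr_gt0 ?area_gt0.
rewrite (bigD1 i) //= mul1r hatE hKi eqxx; apply: ltr_wpDr => //.
by apply: sumr_ge0 => j _; apply: hat_ge0.
Qed.

Lemma ip01_hat_ge0 u a : P0_nonneg u -> 0 <= ip01 p tri u (hat a).
Proof.
move=> hu; apply: sumr_ge0 => K _.
by rewrite !mulr_ge0 ?area_ge0 ?invr_ge0 ?sumr_ge0 // => i _; rewrite hatE ler0n.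
Qed.

Lemma P1_nonneg_node (v : 'I_nV -> R) K i : P1_nonneg tri v -> 0 <= v (tri K i).
Proof.
move=> hv; rewrite -(sum_indicator_mul i (fun j => v (tri K j))).
apply: (hv K) => [j|]; first by rewrite ler0n.
by have := sum_indicator_mul i (fun=> 1 : R); under eq_bigr do rewrite mulr1.
Qed.

Lemma P1_nonneg_nodes (v : 'I_nV -> R) : (forall a, 0 <= v a) -> P1_nonneg tri v.
Proof. by move=> hv K l hl _; apply: sumr_ge0 => i _; rewrite mulr_ge0. Qed.

Lemma a_upw_neg_part_le0 (mu u : 'I_nT -> R) :
  a_upw p tri mu (fun K => posp (u K)) (fun K => negp (u K)) <= 0.
Proof.
apply: sumr_le0 => K _; apply: sumr_le0 => L _.
by apply: upwind_flux_le0; rewrite divr_ge0 ?sqrtr_ge0.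
Qed.

Lemma ip00_diff_neg_part (u um : 'I_nT -> R) dt :
  ip00 p tri (fun K => (u K - um K) / dt) (fun K => negp (u K)) =
  - (\sum_K area p tri K * (negp (u K) ^+ 2 + um K * negp (u K))) / dt.
Proof.
rewrite /ip00 mulNr mulr_suml -sumrN; apply: eq_bigr => K _.
by rewrite -mulNr -mulrN -diff_mul_negp; ring.
Qed.

Lemma step2_nonneg dt (mu um u : 'I_nT -> R) :
  (forall K, sdet p tri K != 0) -> 0 < dt -> P0_nonneg um ->
  (forall ubar, ip00 p tri (fun K => (u K - um K) / dt) ubar
                + a_upw p tri mu (fun K => posp (u K)) ubar = 0) ->
  P0_nonneg u.
Proof.
move=> hsdet hdt hum hstep K0; rewrite leNgt; apply/negP => hneg.
have := hstep (fun K => negp (u K)); rewrite ip00_diff_neg_part.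
have term_ge0 K : 0 <= area p tri K * (negp (u K) ^+ 2 + um K * negp (u K)).
  by rewrite mulr_ge0 ?area_ge0 ?addr_ge0 ?sqr_ge0 ?mulr_ge0 ?negp_ge0.
have hsum : 0 < \sum_K area p tri K * (negp (u K) ^+ 2 + um K * negp (u K)).
  rewrite (bigD1 K0) //= ltr_wpDr ?sumr_ge0 // mulr_gt0 ?area_gt0 //.
  by rewrite ltr_wpDr ?mulr_ge0 ?negp_ge0 // exprn_gt0 // negp_gt0.
have := a_upw_neg_part_le0 mu u; have := divr_gt0 hsum hdt.
rewrite mulNr; lra.
Qed.

Section ImplicitReactionDiffusionStep.
Variables (tau dt k2 k3 k4 : R) (um : 'I_nT -> R) (vm v1 : 'I_nV -> R).
Hypothesis hstep : step1 p tri tau dt k2 k3 k4 um vm v1.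

Lemma step1_hat a :
  (tau / dt + k3) * lumped_mass a * v1 a =
  tau * vm a / dt * lumped_mass a - k2 * stiff p tri v1 (hat a)
  + k4 * ip01 p tri um (hat a).
Proof.
have := hstep (hat a); rewrite !lumped_hat.
set M := lumped_mass a; set S := stiff _ _ _ _; set I := ip01 _ _ _ _.
by move=> e; rewrite -[LHS]subr0 -e; ring.
Qed.

Lemma step1_nonneg : (forall K, sdet p tri K != 0) ->
  (forall a, exists K i, tri K i = a) -> H2 p tri ->
  0 <= tau -> 0 < dt -> 0 <= k2 -> 0 < k3 -> 0 <= k4 ->
  P0_nonneg um -> (forall a, 0 <= tau * vm a) -> forall b, 0 <= v1 b.
Proof.
move=> hsdet hnode hH2 htau hdt hk2 hk3 hk4 hum hvm b.
pose a := [arg min_(c < b) v1 c]%O.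
have amin : forall c, v1 a <= v1 c.
  by rewrite /a; case: arg_minP => // c _ hc d; apply: hc.
apply: le_trans (amin b).
have [K [i hKi]] := hnode a.
have hM := lumped_mass_gt0 hsdet hKi.
have hcoef : 0 < (tau / dt + k3) * lumped_mass a.
  by rewrite mulr_gt0 // ltr_wpDl // divr_ge0 // ltW.
rewrite -(pmulr_rge0 _ hcoef) step1_hat addr_ge0 ?mulr_ge0 ?ip01_hat_ge0 //.
have hS := stiff_hat_le0 hsdet hH2 amin.
rewrite subr_ge0 (le_trans (mulr_ge0_le0 hk2 hS)) //.
by rewrite mulr_ge0 ?divr_ge0 ?hvm ?ltW.
Qed.

End ImplicitReactionDiffusionStep.

End Mesh.

Unset Implicit Arguments.
Theorem mainTheorem2 (R : realType) (nV nT : nat)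
    (p : 'I_nV -> R * R) (tri : 'I_nT -> 'I_3 -> 'I_nV)
    (k0 k1 k2 k3 k4 tau dt eps : R)
    (um : 'I_nT -> R) (vm : 'I_nV -> R)
    (v1 : 'I_nV -> R) (u1 mu1 : 'I_nT -> R) :
  is_mesh p tri -> H1 p tri -> H2 p tri ->
  0 < k0 -> 0 < k1 -> 0 < k2 -> 0 < k3 -> 0 < k4 ->
  (tau = 0 \/ tau = 1) -> 0 < dt -> 0 < eps ->
  P0_nonneg um -> (0 < tau -> P1_nonneg tri vm) ->
  step1 p tri tau dt k2 k3 k4 um vm v1 ->
  step2 p tri dt eps k0 k1 um u1 mu1 v1 ->
  P0_nonneg u1 /\ P1_nonneg tri v1.
Proof.
move=> [hsdet [hnode _]] _ hH2 _ _ hk2 hk3 hk4 htau hdt _ hum hvm hs1 [_ [hs2 _]].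
split; first exact: step2_nonneg hsdet hdt hum hs2.
apply: P1_nonneg_nodes; apply: (step1_nonneg hs1) => //; try exact: ltW.
  by case: htau => ->.
move=> a; case: htau => htau; first by rewrite htau mul0r.
have [K [i <-]] := hnode a.
by rewrite htau mul1r (P1_nonneg_node K i (hvm _)) // htau ltr01.
Qed.
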